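(* Let $\Lambda$ denote the von Mangoldt function and let $\varepsilon>0$ be a small number. Then, as $x\to\infty$, \[ \sum_{n\leq x} \Lambda\left( [x/n]^3+2 \right) = a_3 x + O\left( x^{(2+\varepsilon)/3}\log^2 x \right), \] where the density constant is \[ a_3=\sum_{n\geq 1}\frac{\Lambda(n^3+2)}{n(n+1)}\geq 1.002998. \]
   Context: $[t]$ denotes the largest integer not exceeding $t$. The von Mangoldt function is $\Lambda(m)=\log p$ if $m=p^k$ for a prime $p$ and an integer $k\geq 1$, and $\Lambda(m)=0$ otherwise. The sum is over positive integers $n\le x$. *)

From HB Require Import structures.
From mathcomp Require Import all_boot all_order all_algebra.
From mathcomp Require Import all_classical all_reals all_analysis.
Set Implicit Arguments. Unset Strict Implicit. Unset Printing Implicit Defensive.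
Import Order.TTheory GRing.Theory Num.Theory.
Local Open Scope ring_scope.

(* The sum ranges over primes p <= m admitting such a k <= m;
   there is at most one such p, so the sum is either ln p or 0. *)
Definition vonMangoldt (R : realType) (m : nat) : R :=
  \sum_(p < m.+1 | prime p && [exists k : 'I_m.+1, (0 < k)%N && (m == p ^ k)%N])
     ln (p%:R : R).

Definition floorn (R : realType) (t : R) : nat := Num.truncn t.

Definition Ssum (R : realType) (x : R) : R :=
  \sum_(1 <= n < (floorn x).+1) vonMangoldt R ((floorn (x / n%:R)) ^ 3 + 2)%N.

(* k-th term (k >= 0) of the series a_3 = sum_{n>=1} Lambda(n^3+2)/(n(n+1)),
   with n = k+1 *)
Definition a3_term (R : realType) (k : nat) : R :=
  vonMangoldt R (k.+1 ^ 3 + 2)%N / (k.+1 * k.+2)%:R.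

From HB Require Import structures.
From mathcomp Require Import all_boot all_order all_algebra.
From mathcomp Require Import all_classical all_reals all_analysis.
From mathcomp Require Import zify ring lra.
Set Implicit Arguments.
Unset Strict Implicit.
Unset Printing Implicit Defensive.
Import Order.TTheory GRing.Theory Num.Theory numFieldNormedType.Exports.
Local Open Scope classical_set_scope.
Local Open Scope ring_scope.

(* Write X = [x], so that [x/n] = [X/n].  Every value m <= M = [sqrt x] of the
   quotient is taken for exactly X/m - X/(m+1) = X/(m(m+1)) + O(1) indices n, and the
   larger values come from the n <= X/(M+1) <= sqrt x.  As Lambda(m^3+2) <= 3 log(m+1),
   S(x) = X sum_{m<=M} Lambda(m^3+2)/(m(m+1)) + O(sqrt x log x); the same bound makes the
   terms telescope against 3 (log m + 2)/m, so the tail of the series beyond M is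
   O(log M / M).  The lower bound on a_3 keeps the
   terms n = 1, 3, 5, 29, where n^3 + 2 is prime. *)

Lemma prime_power_base_uniq p q k j : prime p -> prime q -> (0 < k)%N -> (0 < j)%N ->
  (p ^ k = q ^ j)%N -> p = q.
Proof.
move=> pp pq; case: k => // k _; case: j => // j _ e.
by rewrite -(pdiv_pfactor k pp) e pdiv_pfactor.
Qed.

Section VonMangoldt.
Variable R : realType.

Lemma vonMangoldt_ge0 m : 0 <= vonMangoldt R m.
Proof.
by apply: sumr_ge0 => p /andP[pp _]; rewrite ln_ge0 // ler1n prime_gt0.
Qed.

Lemma vonMangoldt_prime_pow p k : prime p -> (0 < k)%N ->
  vonMangoldt R (p ^ k) = ln p%:R.
Proof.
move=> pp k0; rewrite /vonMangoldt.
have p_lt : (p < (p ^ k).+1)%N by rewrite ltnS -{1}(expn1 p) leq_exp2l ?prime_gt1.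
have k_lt : (k < (p ^ k).+1)%N by rewrite ltnS ltnW // ltn_expl ?prime_gt1.
rewrite (bigD1 (Ordinal p_lt)) /=; last first.
  by rewrite pp; apply/existsP; exists (Ordinal k_lt); rewrite k0 eqxx.
rewrite big1 ?addr0 // => q /andP[/andP[pq /existsP[j /andP[j0 /eqP e]]] nq].
case/negP: nq; apply/eqP/val_inj.
exact: (prime_power_base_uniq pq pp j0 k0 (esym e)).
Qed.

Lemma vonMangoldt_prime p : prime p -> vonMangoldt R p = ln p%:R.
Proof. by move=> pp; rewrite -{1}(expn1 p) vonMangoldt_prime_pow. Qed.

Lemma vonMangoldt_le_ln m : (0 < m)%N -> vonMangoldt R m <= ln m%:R.
Proof.
move=> m0; rewrite /vonMangoldt.
case: (pickP (fun p : 'I_m.+1 =>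
  prime p && [exists k : 'I_m.+1, (0 < k)%N && (m == p ^ k)%N])) =>
    [p /andP[pp /existsP[k /andP[k0 /eqP em]]] | none]; last first.
  by rewrite big_pred0 // ln_ge0 // ler1n.
rewrite -/(vonMangoldt R m) em vonMangoldt_prime_pow //.
rewrite ler_ln ?posrE ?ltr0n ?expn_gt0 ?prime_gt0 //.
by rewrite ler_nat -{1}(expn1 p) leq_exp2l ?prime_gt1.
Qed.

Lemma vonMangoldt_cube_add2_le m : (0 < m)%N ->
  vonMangoldt R (m ^ 3 + 2) <= 3 * ln m.+1%:R.
Proof.
move=> m0; apply: le_trans (vonMangoldt_le_ln _) _; first by rewrite addn_gt0 orbT.
rewrite mulr_natl -lnXn ?ltr0n // -natrX.
rewrite ler_ln ?posrE ?ltr0n ?expn_gt0 ?addn_gt0 ?orbT // ler_nat.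
rewrite !expnS expn0 !muln1; nia.
Qed.

End VonMangoldt.

Lemma ln_succ_telescope (R : realType) (a : R) : 1 <= a ->
  ln (a + 1) / (a * (a + 1)) <= (ln a + 2) / a - (ln (a + 1) + 2) / (a + 1).
Proof.
move=> a1; have a0 : 0 < a by lra.
have ln_step : ln (a + 1) - ln a <= a^-1.
  rewrite -ln_div ?posrE; try lra.
  have -> : (a + 1) / a = 1 + a^-1 by field; rewrite gt_eqF.
  by apply: le_ln1Dx; apply: lt_trans (ltrN10 _) _; rewrite invr_gt0.
have a_inv_le1 : a^-1 <= 1 by rewrite invr_le1 // unitfE gt_eqF.
rewrite -subr_ge0.
have -> : (ln a + 2) / a - (ln (a + 1) + 2) / (a + 1) - ln (a + 1) / (a * (a + 1))
    = (2 - (a + 1) * (ln (a + 1) - ln a)) / (a * (a + 1)).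
  by field; rewrite !gt_eqF //; lra.
apply: divr_ge0; last by rewrite mulr_ge0 //; lra.
rewrite subr_ge0; apply: le_trans (_ : (a + 1) * a^-1 <= 2).
  by rewrite ler_pM2l //; lra.
by rewrite mulrDl mulfV ?gt_eqF // mul1r; lra.
Qed.

Lemma series0 (V : zmodType) (u : V ^nat) : series u 0 = 0.
Proof. by rewrite seriesEnat /= big_geq. Qed.

Section A3Series.
Variable R : realType.

Definition a3_tail_bound (n : nat) : R := 3 * (ln n%:R + 2) / n%:R.

Lemma a3_tail_bound_ge0 n : 0 <= a3_tail_bound n.
Proof.
rewrite /a3_tail_bound; case: n => [|n]; first by rewrite invr0 mulr0.
by rewrite divr_ge0 // mulr_ge0 // addr_ge0 // ln_ge0 // ler1n.
Qed.

Lemma a3_term_ge0 k : 0 <= a3_term R k.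
Proof. by rewrite divr_ge0 ?vonMangoldt_ge0. Qed.

Lemma a3_term_le_tail_boundB k :
  a3_term R k <= a3_tail_bound k.+1 - a3_tail_bound k.+2.
Proof.
set a : R := k.+1%:R.
have a1 : 1 <= a by rewrite ler1n.
have a0 : 0 < a * (a + 1) by rewrite mulr_gt0 //; lra.
have succ_a : k.+2%:R = a + 1 by rewrite -natr1.
rewrite /a3_term /a3_tail_bound natrM -/a succ_a.
apply: le_trans (_ : 3 * (ln (a + 1) / (a * (a + 1))) <= _).
  rewrite mulrA ler_pM2r ?invr_gt0 // -succ_a.
  exact: vonMangoldt_cube_add2_le.
by rewrite -!mulrA -mulrBr ler_pM2l ?ln_succ_telescope.
Qed.

Lemma a3_seriesB_le M K : (M <= K)%N ->
  series (@a3_term R) K - series (@a3_term R) M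
    <= a3_tail_bound M.+1 - a3_tail_bound K.+1.
Proof.
move=> MK; rewrite seriesEnat /= (@big_cat_nat _ _ _ M 0 K _ _ (leq0n M) MK) /=.
rewrite addrC addrK.
have -> : a3_tail_bound M.+1 - a3_tail_bound K.+1
    = \sum_(M <= k < K) (a3_tail_bound k.+1 - a3_tail_bound k.+2).
  rewrite (@telescope_sumr_eq _ M K (fun k => - a3_tail_bound k.+1)) //.
    by rewrite opprK addrC.
  by move=> k _; rewrite opprK addrC.
by apply: ler_sum => k _; exact: a3_term_le_tail_boundB.
Qed.

Lemma a3_series_nondecreasing : nondecreasing_seq (series (@a3_term R)).
Proof. by apply: nondecreasing_series => k _ _; exact: a3_term_ge0. Qed.

Lemma a3_series_cvg : cvgn (series (@a3_term R)).
Proof.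
apply: nondecreasing_is_cvgn; first exact: a3_series_nondecreasing.
exists (a3_tail_bound 1) => _ [n _ <-].
have := a3_seriesB_le (leq0n n).
rewrite series0 subr0 => /le_trans; apply.
by rewrite gerBl a3_tail_bound_ge0.
Qed.

Definition a3 : R := limn (series (@a3_term R)).

Lemma a3_series_le M : series (@a3_term R) M <= a3.
Proof.
exact: nondecreasing_cvgn_le a3_series_nondecreasing a3_series_cvg M.
Qed.

Lemma a3_ge0 : 0 <= a3.
Proof. by apply: le_trans (a3_series_le 0); rewrite series0. Qed.

Lemma a3_le_series_tail M : a3 <= series (@a3_term R) M + a3_tail_bound M.+1.
Proof.
apply: limr_le; first exact: a3_series_cvg.
exists M => // K /= MK; rewrite -lerBlDl.
apply: le_trans (a3_seriesB_le MK) _.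
by rewrite gerBl a3_tail_bound_ge0.
Qed.

Lemma mul_a3_sub_series_le (X M : nat) :
  X%:R * (a3 - series (@a3_term R) M) <= 3 * (X%:R / M.+1%:R) * (ln M.+1%:R + 2).
Proof.
have -> : 3 * (X%:R / M.+1%:R) * (ln M.+1%:R + 2) = X%:R * a3_tail_bound M.+1.
  by rewrite /a3_tail_bound; ring.
by rewrite ler_wpM2l // lerBlDl a3_le_series_tail.
Qed.

End A3Series.

Section LnTaylor.
Variable R : realType.

Definition ln1D_taylor6 (t : R) : R :=
  t - t ^+ 2 / 2 + t ^+ 3 / 3 - t ^+ 4 / 4 + t ^+ 5 / 5 - t ^+ 6 / 6.

Lemma is_derive_ln_sub_taylor6 (z : R) : 0 < z ->
  is_derive z 1 (fun z => ln z - ln1D_taylor6 (z - 1)) ((z - 1) ^+ 6 / z).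
Proof.
move=> z0; rewrite /ln1D_taylor6; apply: trigger_derive.
apply: is_deriveB; first exact: is_derive1_ln.
rewrite /= !subr0 !scaler1 !scaler0 !add0r /GRing.scale /=.
by field; rewrite gt_eqF.
Qed.

Lemma ln1D_taylor6_le (t : R) : 0 <= t -> ln1D_taylor6 t <= ln (1 + t).
Proof.
move=> t0; set h := fun z => ln z - ln1D_taylor6 (z - 1).
suff : h 1 <= h (1 + t).
  by rewrite /h ln1 subrr (addrC 1 t) addrK /ln1D_taylor6 !expr0n /= !mul0r; lra.
have gt1 z : z \in `]1, 1 + t[ -> 1 < z by rewrite in_itv /= => /andP[].
apply: (@ger0_derive1_ndecr R h 1 (1 + t)) => //; last by rewrite lerDl.
- by move=> z /gt1 /(lt_trans ltr01) /is_derive_ln_sub_taylor6 [].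
- move=> z /gt1 z1; rewrite derive1E.
  have [_ ->] := is_derive_ln_sub_taylor6 (lt_trans ltr01 z1).
  by rewrite divr_ge0 ?exprn_ge0; lra.
- apply: derivable_within_continuous => z; rewrite in_itv /= => /andP[z1 _].
  by have [] := is_derive_ln_sub_taylor6 (lt_le_trans ltr01 z1).
Qed.

Lemma ln_ge1 (x : R) : 8 <= x -> 1 <= ln x.
Proof.
move=> x8; have := ln1D_taylor6_le (@ler01 R); rewrite (_ : 1 + 1 = 2) // => ln2.
have ln8 : ln 8 = 3 * ln 2 :> R by rewrite mulr_natl -lnXn ?ltr0n // -natrX.
have : ln 8 <= ln x by rewrite ler_ln ?posrE //; lra.
by move: ln2; rewrite /ln1D_taylor6 !expr1n ln8; lra.
Qed.

End LnTaylor.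

Section A3Numeric.
Variable R : realType.

Lemma ln_natM a b : (0 < a)%N -> (0 < b)%N ->
  ln (a * b)%:R = ln a%:R + ln b%:R :> R.
Proof. by move=> a0 b0; rewrite natrM lnM ?posrE ?ltr0n. Qed.

Lemma ln_natX a n : (0 < a)%N -> ln (a ^ n)%:R = n%:R * ln a%:R :> R.
Proof. by move=> a0; rewrite natrX lnXn ?ltr0n // mulr_natl. Qed.

Lemma ln_natD_ge b c : (0 < b)%N ->
  ln1D_taylor6 (c%:R / b%:R) <= ln (b + c)%:R - ln b%:R :> R.
Proof.
move=> b0; have bpos : (0 : R) < b%:R by rewrite ltr0n.
rewrite -ln_div ?posrE ?ltr0n ?addn_gt0 ?b0 //.
have -> : (b + c)%:R / b%:R = 1 + c%:R / b%:R :> R.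
  by rewrite natrD mulrDl mulfV ?gt_eqF.
by apply: ln1D_taylor6_le; rewrite divr_ge0.
Qed.

Lemma a3_series29_ge :
  a3_term R 0 + a3_term R 2 + a3_term R 4 + a3_term R 28 <= series (@a3_term R) 29.
Proof.
rewrite seriesEnat /= (bigID (fun k => k \in [:: 0; 2; 4; 28]%N)) /=.
rewrite -[X in X <= _]addr0; apply: lerD.
  by rewrite big_mkcond /= unlock /= !add0r !addr0 !addrA.
by apply: sumr_ge0 => k _; exact: a3_term_ge0.
Qed.

(* The logarithms of 2, 3, 5, 7, 29, 127, 24391 are bounded below by ln_natD_ge at the
   near-coincidences 16/15, 25/24, 81/80, 29/27, 49/48, 127/126 and 24391/24389. *)
Lemma a3_ge_1002998 : 1002998%:R / 1000000%:R <= a3 R.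
Proof.
apply: le_trans (a3_series_le R 29); apply: le_trans a3_series29_ge.
have -> : a3_term R 0 = ln 3%:R / 2%:R by rewrite /a3_term vonMangoldt_prime.
have -> : a3_term R 2 = ln 29%:R / 12%:R by rewrite /a3_term vonMangoldt_prime.
have -> : a3_term R 4 = ln 127%:R / 30%:R by rewrite /a3_term vonMangoldt_prime.
have -> : a3_term R 28 = ln 24391%:R / 870%:R.
  rewrite /a3_term; have -> : (29 ^ 3 + 2 = 24391)%N by [].
  by have -> : (29 * 30 = 870)%N by []; rewrite vonMangoldt_prime.
have ln16 : ln1D_taylor6 (1%:R / 15%:R) <= 4%:R * ln 2%:R - (ln 3%:R + ln 5%:R) :> R.
  by rewrite -ln_natX // -ln_natM //; exact: (ln_natD_ge 1 (isT : (0 < 15)%N)).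
have ln25 : ln1D_taylor6 (1%:R / 24%:R) <= 2%:R * ln 5%:R - (3%:R * ln 2%:R + ln 3%:R) :> R.
  by rewrite -!ln_natX // -ln_natM //; exact: (ln_natD_ge 1 (isT : (0 < 24)%N)).
have ln81 : ln1D_taylor6 (1%:R / 80%:R) <= 4%:R * ln 3%:R - (4%:R * ln 2%:R + ln 5%:R) :> R.
  by rewrite -!ln_natX // -ln_natM //; exact: (ln_natD_ge 1 (isT : (0 < 80)%N)).
have ln29 : ln1D_taylor6 (2%:R / 27%:R) <= ln 29%:R - 3%:R * ln 3%:R :> R.
  by rewrite -ln_natX //; exact: (ln_natD_ge 2 (isT : (0 < 27)%N)).
have ln49 : ln1D_taylor6 (1%:R / 48%:R) <= 2%:R * ln 7%:R - (4%:R * ln 2%:R + ln 3%:R) :> R.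
  by rewrite -!ln_natX // -ln_natM //; exact: (ln_natD_ge 1 (isT : (0 < 48)%N)).
have ln127 : ln1D_taylor6 (1%:R / 126%:R)
    <= ln 127%:R - (ln 2%:R + (2%:R * ln 3%:R + ln 7%:R)) :> R.
  by rewrite -ln_natX // -!ln_natM //; exact: (ln_natD_ge 1 (isT : (0 < 126)%N)).
have ln24391 : ln1D_taylor6 (2%:R / 24389%:R) <= ln 24391%:R - 3%:R * ln 29%:R :> R.
  by rewrite -ln_natX //; exact: (ln_natD_ge 2 (isT : (0 < 24389)%N)).
move: ln16 ln25 ln81 ln29 ln49 ln127 ln24391; rewrite /ln1D_taylor6; lra.
Qed.

End A3Numeric.

Section DivisorQuotientSums.
Variable R : realType.

Lemma sum_nat_cond_le_const (c : R) K X : (K <= X)%N ->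
  \sum_(1 <= n < X.+1) (if (n <= K)%N then c else 0) = c *+ K.
Proof.
move=> KX; rewrite (@big_cat_nat _ _ _ K.+1) ?ltnS //=.
rewrite [X in _ + X]big_nat_cond [X in _ + X]big1 ?addr0; last first.
  by move=> n /andP[/andP[Kn _] _]; rewrite leqNgt Kn.
rewrite (@eq_big_nat _ _ _ _ _ _ (fun _ => c)) ?sumr_const_nat ?subn1 //.
by move=> n /andP[_]; rewrite ltnS => ->.
Qed.

Lemma sum_divn_ge X j : (0 < j)%N ->
  \sum_(1 <= n < X.+1) ((j <= X %/ n)%N : nat)%:R = (X %/ j)%:R :> R.
Proof.
move=> j0; rewrite -(sum_nat_cond_le_const 1 (leq_div X j)).
apply: eq_big_nat => n /andP[n0 _].
by rewrite !leq_divRL // mulnC; case: (n * j <= X)%N.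
Qed.

Lemma sum_divn_eq X m : (0 < m)%N ->
  \sum_(1 <= n < X.+1) ((X %/ n == m)%N : nat)%:R = (X %/ m)%:R - (X %/ m.+1)%:R :> R.
Proof.
move=> m0; rewrite -!sum_divn_ge // -sumrB; apply: eq_bigr => n _.
by case: (ltngtP (X %/ n) m) => _; rewrite ?subrr ?subr0.
Qed.

Lemma natr_divn_bounds X m : (0 < m)%N ->
  ((X %/ m)%:R : R) <= X%:R / m%:R /\ (X%:R / m%:R : R) < (X %/ m)%:R + 1.
Proof.
move=> m0; have mpos : (0 : R) < m%:R by rewrite ltr0n.
rewrite ler_pdivlMr // ltr_pdivrMr // natr1 -!natrM ler_nat ltr_nat.
by rewrite leq_divM ltn_ceil.
Qed.

Lemma divn_subS_approx X k :
  `|((X %/ k.+1)%:R - (X %/ k.+2)%:R) - X%:R / (k.+1 * k.+2)%:R| <= 1 :> R.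
Proof.
have [lo1 hi1] := natr_divn_bounds X (ltn0Sn k).
have [lo2 hi2] := natr_divn_bounds X (ltn0Sn k.+1).
have -> : X%:R / (k.+1 * k.+2)%:R = X%:R / k.+1%:R - X%:R / k.+2%:R :> R.
  have succ_k : k.+2%:R = k.+1%:R + 1 :> R by rewrite natr1.
  have k0 : (0 : R) < k.+1%:R by rewrite ltr0n.
  by rewrite natrM succ_k; field; rewrite !gt_eqF //; lra.
move: lo1 hi1 lo2 hi2.
move: (X%:R / k.+1%:R : R) (X%:R / k.+2%:R : R) ((X %/ k.+1)%:R : R) ((X %/ k.+2)%:R : R).
by move=> u v a b *; rewrite ler_norml; apply/andP; split; lra.
Qed.

Variable f : nat -> R.

Lemma sum_divn_fiber X M n : (0 < n)%N -> (n <= X)%N ->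
  (if (X %/ n <= M)%N then f (X %/ n) else 0)
  = \sum_(0 <= k < M) f k.+1 * ((X %/ n == k.+1)%N : nat)%:R.
Proof.
move=> n0 nX; case: leqP => [qM | Mq].
  have q0 : (0 < X %/ n)%N by rewrite divn_gt0.
  rewrite (bigD1_seq (X %/ n).-1) /=; last exact: iota_uniq; last first.
    by rewrite mem_index_iota prednK.
  rewrite prednK // eqxx mulr1 big1_seq ?addr0 // => k /andP[kq _].
  by rewrite (_ : (_ == _) = false) ?mulr0 //; apply: contraNF kq => /eqP ->.
rewrite big1_seq // => k; rewrite mem_index_iota => /andP[_ kM].
rewrite (_ : (_ == _) = false) ?mulr0 //.
by apply: contraTF Mq => /eqP ->; rewrite -leqNgt.
Qed.

Variables (X M : nat) (B : R).
Hypothesis f_le : forall m, (0 < m)%N -> (m <= X)%N -> `|f m| <= B.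

Lemma sum_large_divn_le :
  `|\sum_(1 <= n < X.+1 | (M < X %/ n)%N) f (X %/ n)| <= (X %/ M.+1)%:R * B.
Proof.
apply: le_trans (ler_norm_sum _ _ _) _.
rewrite mulr_natl -(sum_nat_cond_le_const B (leq_div X M.+1)) big_mkcond /=.
apply: ler_sum_nat => n /andP[n0 _].
have -> : (n <= X %/ M.+1)%N = (M < X %/ n)%N by rewrite !leq_divRL // mulnC.
case: ifP => // Mq.
by apply: f_le; [exact: leq_ltn_trans (leq0n M) Mq | exact: leq_div].
Qed.

Hypothesis MX : (M <= X)%N.

Lemma sum_small_divn_approx :
  `|\sum_(1 <= n < X.+1 | (X %/ n <= M)%N) f (X %/ n)
     - X%:R * \sum_(0 <= k < M) f k.+1 / (k.+1 * k.+2)%:R| <= M%:R * B.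
Proof.
have -> : \sum_(1 <= n < X.+1 | (X %/ n <= M)%N) f (X %/ n)
    = \sum_(0 <= k < M) f k.+1 * ((X %/ k.+1)%:R - (X %/ k.+2)%:R).
  rewrite big_mkcond /=.
  under eq_big_nat => n /andP[n0 nX] do rewrite (sum_divn_fiber M n0 (nX : n <= X)%N).
  by rewrite exchange_big_nat; apply: eq_bigr => k _; rewrite -mulr_sumr sum_divn_eq.
rewrite mulr_sumr -sumrB; apply: le_trans (ler_norm_sum _ _ _) _.
rewrite mulr_natl -[M in B *+ M]subn0 -sumr_const_nat.
apply: ler_sum_nat => k /andP[_ kM].
rewrite mulrCA -mulrBr normrM -[B]mulr1.
by apply: ler_pM; rewrite ?normr_ge0 ?divn_subS_approx // f_le // (leq_trans kM).
Qed.

Lemma sum_divn_approx :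
  `|\sum_(1 <= n < X.+1) f (X %/ n)
     - X%:R * \sum_(0 <= k < M) f k.+1 / (k.+1 * k.+2)%:R|
    <= (M%:R + (X %/ M.+1)%:R) * B.
Proof.
rewrite (bigID (fun n => (X %/ n <= M)%N)) /= addrAC mulrDl.
apply: le_trans (ler_normD _ _) _; apply: lerD.
  exact: sum_small_divn_approx.
under eq_bigl => n do rewrite -ltnNge.
exact: sum_large_divn_le.
Qed.

End DivisorQuotientSums.

Section SsumEstimate.
Variable R : realType.

Lemma floorn_div (x : R) n : 0 <= x -> (0 < n)%N ->
  floorn (x / n%:R) = (floorn x %/ n)%N.
Proof.
move=> x0 n0; have npos : (0 : R) < n%:R by rewrite ltr0n.
have /andP[lo hi] := truncn_itv x0.
apply: truncn_def; rewrite ler_pdivlMr // ltr_pdivrMr // -!natrM.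
apply/andP; split.
  by apply: le_trans lo; rewrite ler_nat leq_divM.
by apply: lt_le_trans hi _; rewrite ler_nat ltn_ceil.
Qed.

Lemma SsumE (x : R) : 0 <= x ->
  Ssum x = \sum_(1 <= n < (floorn x).+1) vonMangoldt R ((floorn x %/ n) ^ 3 + 2).
Proof.
by move=> x0; apply: eq_big_nat => n /andP[n0 _]; rewrite floorn_div.
Qed.

Lemma Ssum_sub_series_le (x : R) M : 1 <= x -> (M <= floorn x)%N ->
  `|Ssum x - (floorn x)%:R * series (@a3_term R) M|
    <= (M%:R + (floorn x %/ M.+1)%:R) * (3 * ln (x + 1)).
Proof.
move=> x1 MX; have x0 : 0 <= x by lra.
have f_le m : (0 < m)%N -> (m <= floorn x)%N ->
    `|vonMangoldt R (m ^ 3 + 2)| <= 3 * ln (x + 1).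
  move=> m0 mX; rewrite ger0_norm ?vonMangoldt_ge0 //.
  apply: le_trans (vonMangoldt_cube_add2_le R m0) _.
  rewrite ler_pM2l // ler_ln ?posrE ?ltr0n //; last by lra.
  rewrite -natr1 lerD2r; apply: le_trans (_ : (floorn x)%:R <= x).
    by rewrite ler_nat.
  by have /andP[] := truncn_itv x0.
by rewrite SsumE // seriesEnat; exact: sum_divn_approx f_le MX.
Qed.

Lemma Ssum_sub_a3_le (x : R) : 1 <= x ->
  `|Ssum x - a3 R * x| <= 9 * Num.sqrt x * ln (x + 1) + 6 * Num.sqrt x + a3 R.
Proof.
move=> x1; set y := Num.sqrt x; set L := ln (x + 1); set a := a3 R.
have y1 : 1 <= y by rewrite -sqrtr1 ler_sqrt //; lra.
have yy : y * y = x by rewrite -expr2 sqr_sqrtr //; lra.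
have L0 : 0 <= L by rewrite ln_ge0 //; lra.
set X := floorn x; set M := floorn y.
have /andP[X_le x_lt] : X%:R <= x < X.+1%:R := truncn_itv (le_trans ler01 x1).
have /andP[M_le y_lt] : M%:R <= y < M.+1%:R := truncn_itv (le_trans ler01 y1).
have MX : (M <= X)%N by apply: le_truncn; rewrite -yy ler_peMl //; lra.
have XM_le : X%:R / M.+1%:R <= y.
  rewrite ler_pdivrMr ?ltr0n //; apply: le_trans X_le _.
  by rewrite -yy ler_pM2l //; lra.
have K_le : ((X %/ M.+1)%:R : R) <= y.
  by apply: le_trans XM_le; have [] := natr_divn_bounds R X (ltn0Sn M).
have split_err := Ssum_sub_series_le x1 MX; rewrite -/X -/L in split_err.
set s := series _ M in split_err.
have split_le : (M%:R + (X %/ M.+1)%:R) * (3 * L) <= 2 * y * (3 * L).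
  by rewrite ler_wpM2r ?mulr_ge0 // mulr2n mulrDl mul1r lerD.
have tail_lo : 0 <= X%:R * (a - s) by rewrite mulr_ge0 // subr_ge0 a3_series_le.
have tail_hi : X%:R * (a - s) <= 3 * y * (L + 2).
  apply: le_trans (mul_a3_sub_series_le R X M) _.
  apply: ler_pM; rewrite ?mulr_ge0 ?divr_ge0 ?addr_ge0 ?ln_ge0 ?ler1n ?ler_pM2l //.
  rewrite lerD2r ler_ln ?posrE ?ltr0n //; last lra.
  rewrite -natr1 lerD2r; apply: le_trans M_le _.
  by rewrite -yy ler_peMl //; lra.
have frac_lo : 0 <= a * (x - X%:R) by rewrite mulr_ge0 ?a3_ge0 // subr_ge0.
have frac_hi : a * (x - X%:R) <= a.
  by rewrite ler_piMr ?a3_ge0 //; rewrite -natr1 in x_lt; lra.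
have -> : Ssum x - a * x = (Ssum x - X%:R * s) - (X%:R * (a - s) + a * (x - X%:R)).
  by ring.
apply: le_trans (ler_normB _ _) _; rewrite [`|X%:R * _ + _|]ger0_norm ?addr_ge0 //.
lra.
Qed.

Lemma Ssum_sub_a3_le_sqrt_ln (x : R) : 8 <= x ->
  `|Ssum x - a3 R * x| <= (24 + a3 R) * Num.sqrt x * ln x.
Proof.
move=> x8; apply: le_trans (Ssum_sub_a3_le _) _; first lra.
have lnx1 := ln_ge1 x8.
have y1 : 1 <= Num.sqrt x by rewrite -sqrtr1 ler_sqrt //; lra.
have L_le : ln (x + 1) <= 2 * ln x.
  rewrite mulr_natl -lnXn ?ler_ln ?posrE ?exprn_gt0; try lra.
  by rewrite expr2; nra.
have a0 := a3_ge0 R.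
move: (Num.sqrt x) y1 => y y1; move: (ln x) (ln (x + 1)) lnx1 L_le => l L l1 L_le.
have yl1 : 1 <= y * l by rewrite mulr_ege1.
have yL : y * L <= y * (2 * l) by rewrite ler_wpM2l //; lra.
have y_le : y <= y * l by rewrite ler_peMr //; lra.
have a_le : a3 R <= a3 R * (y * l) by rewrite ler_peMr.
lra.
Qed.

End SsumEstimate.

Theorem theorem1p4 (R : realType) :
  exists a3 : R,
    series (@a3_term R) @ \oo --> a3 /\
    (1002998%:R / 1000000%:R : R) <= a3 /\
    (forall eps : R, 0 < eps ->
       exists C : R, exists X0 : R, forall x : R, X0 <= x ->
         `| Ssum x - a3 * x | <= C * (x `^ ((2 + eps) / 3)) * (ln x) ^+ 2).
Proof.
exists (a3 R); split; first exact: a3_series_cvg.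
split; first exact: a3_ge_1002998.
move=> eps eps0; exists (24 + a3 R), 8 => x x8.
apply: le_trans (Ssum_sub_a3_le_sqrt_ln x8) _.
have lnx1 := ln_ge1 x8.
rewrite -!mulrA ler_wpM2l ?addr_ge0 ?a3_ge0 //.
apply: ler_pM; rewrite ?sqrtr_ge0 ?ln_ge0 //; try lra.
  by rewrite -powR12_sqrt; [apply: ler_powR|]; lra.
by rewrite expr2 ler_peMl //; lra.
Qed.
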